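(* Let $\delta,\tau$ be positive integers with $\gcd(\delta,\tau)=1$, let $\ell\ge 1$ be an integer and let $t=\ell\tau$. Then \[ g\Big(1+\frac{\delta}{\tau},t\Big)\le \frac{\ell\delta^2+\tau+2\delta t}{2\ell\delta^2+\delta+\tau+2\delta t}. \]
   Context: Let $\mathbb{F}$ be a finite field and $x_1,\dots,x_p$ a basis of $\mathbb{F}^p$. A $[t\times m,p]$ array code is a $t\times m$ array whose entries (cells) are linear combinations of $x_1,\dots,x_p$; its columns are called servers. It has the $k$-PIR property (is a $[t\times m,p]$ $k$-PIR array code) if for every $i\in\{1,\dots,p\}$ there exist $k$ pairwise disjoint sets $S_1,\dots,S_k$ of columns such that for every $j$ the vector $x_i$ lies in the linear span of all entries of the columns in $S_j$. Its PIR rate is $k/m$. For a rational $s>1$ and a positive integer $t$ with $st$ an integer, $g(s,t)$ is the largest PIR rate $k/m$ of a $[t\times m,st]$ $k$-PIR array code (over all finite fields, all $m$ and all $k$). *)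

From HB Require Import structures.
From mathcomp Require Import all_boot all_order all_algebra.
Set Implicit Arguments. Unset Strict Implicit. Unset Printing Implicit Defensive.
Import Order.TTheory GRing.Theory Num.Theory.
Local Open Scope ring_scope.

(* A [t x m, p] array code over F: cell (r, j) (row r, column/server j) is a
   linear combination of the basis x_1..x_p of F^p, represented by its
   coefficient row vector in 'rV[F]_p.  The basis vector x_i is delta_mx 0 i. *)
Definition array_code (F : fieldType) (t m p : nat) := 'I_t -> 'I_m -> 'rV[F]_p.

Definition cols_span (F : fieldType) (t m p : nat) (C : array_code F t m p)
  (S : {set 'I_m}) : 'M[F]_p :=
  (\sum_(j in S) \sum_(r < t) <<C r j>>)%MS.

Definition is_kPIR (F : fieldType) (t m p : nat) (C : array_code F t m p)
  (k : nat) : Prop :=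
  forall i : 'I_p, exists S : 'I_k -> {set 'I_m},
    (forall a b : 'I_k, a != b -> [disjoint S a & S b]) /\
    (forall a : 'I_k, ((delta_mx (0 : 'I_1) i : 'rV[F]_p) <= cols_span C (S a))%MS).

(* r is the PIR rate k/m of some [t x m, s t] k-PIR array code over some
   finite field (for m = 0, k/m is 0 in rat by convention; such codes only
   exist with k = 0 unless p = 0). *)
Definition PIR_rate_achievable (s : rat) (t : nat) (r : rat) : Prop :=
  exists (F : finFieldType) (m k p : nat) (C : array_code F t m p),
    p%:Q = s * t%:Q /\ is_kPIR C k /\ r = k%:Q / m%:Q.

From HB Require Import structures.
From mathcomp Require Import all_boot all_order all_algebra.
From mathcomp Require Import zify.
From mathcomp.algebra_tactics Require Import ring.
Set Implicit Arguments. Unset Strict Implicit. Unset Printing Implicit Defensive.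
Import Order.TTheory GRing.Theory Num.Theory.
Local Open Scope ring_scope.

(* Write p = t + e.  Say server j stores x_i if x_i lies in the span V_j of its
   cells, and involves x_i if it does not but V_j has a vector with nonzero
   x_i-coefficient.  Since dim V_j <= t, a server storing s files involves at
   most p - s of them, and none at all once s = t; so
   (e + 1) #stored + #involved <= (e + 1) t for every server.  Dually, each of
   the k disjoint recovery sets of x_i contains a server storing it, or at
   least two servers one of which involves it; counting those sets gives
   (2e + 1) k <= (e + 1) #storing + e m + #involving for every file.  Summing
   the second bound over files and the first over servers yields
   p (2e + 1) k <= m ((e + 1) t + p e), which for t = l tau, e = l delta is
   the claimed bound on k / m. *)

Section BasisRows.
Variables (F : fieldType) (p : nat).

Definition basis_row (i : 'I_p) : 'rV[F]_p := delta_mx 0 i.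

Definition zero_coord_space (i : 'I_p) : 'M[F]_p :=
  kermx (delta_mx i (0 : 'I_1) : 'M[F]_(p, 1)).

Lemma basis_row_notin_zero_coord_space i :
  ~~ (basis_row i <= zero_coord_space i)%MS.
Proof.
rewrite sub_kermx /basis_row mul_delta_mx; apply/negP => /eqP /matrixP /(_ 0 0).
by rewrite !mxE /= => /eqP; rewrite oner_eq0.
Qed.

Lemma basis_row_zero_coord_space i' i :
  i' != i -> (basis_row i' <= zero_coord_space i)%MS.
Proof. by move=> neq_i'i; rewrite sub_kermx /basis_row mul_delta_mx_0. Qed.

Definition basis_rows (N : {set 'I_p}) : 'M[F]_(#|N|, p) :=
  \matrix_(a < #|N|) basis_row (enum_val a).

Lemma mxrank_basis_rows N : \rank (basis_rows N) = #|N|.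
Proof.
apply/eqP; rewrite eqn_leq rank_leq_row /=.
pose sel : 'M[F]_(p, #|N|) := \matrix_(k, b) (k == enum_val b)%:R.
have sel_inv : basis_rows N *m sel = 1%:M.
  apply/matrixP => a b.
  have : row a (basis_rows N *m sel) = row (enum_val a) sel.
    by rewrite row_mul rowK /basis_row -rowE.
  move/matrixP => /(_ 0 b); rewrite !mxE => ->.
  by rewrite (inj_eq enum_val_inj).
by rewrite -[X in (X <= _)%N](mxrank1 F) -sel_inv mxrankM_maxl.
Qed.

Lemma basis_rows_sub (N : {set 'I_p}) (A : 'M[F]_p) :
  {in N, forall i, basis_row i <= A}%MS -> (basis_rows N <= A)%MS.
Proof. by move=> NA; apply/row_subP => a; rewrite rowK NA ?enum_valP. Qed.

Lemma basis_rows_sub_zero_coord_space (N : {set 'I_p}) i :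
  i \notin N -> (basis_rows N <= zero_coord_space i)%MS.
Proof.
move=> iN; apply/row_subP => a; rewrite rowK basis_row_zero_coord_space //.
by apply: contraNneq iN => <-; apply: enum_valP.
Qed.

Lemma card_le_mxrank (N : {set 'I_p}) (A : 'M[F]_p) :
  {in N, forall i, basis_row i <= A}%MS -> (#|N| <= \rank A)%N.
Proof. by move/basis_rows_sub/mxrankS; rewrite mxrank_basis_rows. Qed.

(* A space of rank [#|N|] containing the [x_i], [i \in N], is spanned by them. *)
Lemma sub_zero_coord_space_of_mxrank_le (N : {set 'I_p}) (A : 'M[F]_p) i :
  {in N, forall i, basis_row i <= A}%MS -> (\rank A <= #|N|)%N -> i \notin N ->
  (A <= zero_coord_space i)%MS.
Proof.
move=> /basis_rows_sub NA rankA iN.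
apply: submx_trans (basis_rows_sub_zero_coord_space iN).
by rewrite -(geq_leqif (mxrank_leqif_sup NA)) mxrank_basis_rows.
Qed.

Lemma mxrank_sum_genmx_rows n (f : 'I_n -> 'rV[F]_p) :
  (\rank (\sum_(r < n) <<f r>>)%MS <= n)%N.
Proof.
apply: leq_trans (mxrank_sum_leqif _).1 _ => /=.
rewrite -[leqRHS]card_ord -sum1_card; apply: leq_sum => r _.
by rewrite genmxE rank_leq_row.
Qed.

End BasisRows.

Section Counting.
Variable T : finType.

Lemma sum_card_rel (I J : finType) (P : I -> J -> bool) :
  (\sum_i #|[set j | P i j]| = \sum_j #|[set i | P i j]|)%N.
Proof.
rewrite -(eq_bigr _ (fun i _ => sum1dep_card _)).
by rewrite -(eq_bigr _ (fun j _ => sum1dep_card _)) /= (exchange_big_dep predT).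
Qed.

Variables (k : nat) (S : 'I_k -> {set T}).
Hypothesis disjS : forall a b, a != b -> [disjoint S a & S b].

Lemma sum_card_setI_disjoint (A : {set T}) : (\sum_a #|S a :&: A| <= #|A|)%N.
Proof.
rewrite (eq_bigr (fun a => #|[set j | j \in S a :&: A]|)) => [|a _]; last first.
  by apply: eq_card => j; rewrite inE.
rewrite sum_card_rel -[#|A|]sum1_card [leqRHS]big_mkcond /=.
apply: leq_sum => j _; case: ifP => jA.
  apply/card_le1_eqP => a b; rewrite !inE jA !andbT => ja jb.
  by apply/eqP/negPn/negP => /disjS /disjointFr /(_ jb); rewrite ja.
by rewrite leqn0 cards_eq0; apply/eqP/setP => a; rewrite !inE jA andbF.
Qed.

Lemma card_meeting_disjoint (A : {set T}) :
  (#|[set a | S a :&: A != set0]| <= #|A|)%N.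
Proof.
apply: leq_trans (sum_card_setI_disjoint A); rewrite -sum1dep_card.
rewrite [leqRHS](bigID (fun a => S a :&: A != set0)) /=.
by apply: leq_trans (leq_addr _ _); apply: leq_sum => a; rewrite card_gt0.
Qed.

End Counting.

Section ArrayCode.
Variables (F : fieldType) (t m p : nat) (C : array_code F t m p).

Definition server_space (j : 'I_m) : 'M[F]_p := (\sum_(r < t) <<C r j>>)%MS.

Lemma cols_span_server_space S : cols_span C S = (\sum_(j in S) server_space j)%MS.
Proof. by []. Qed.

Definition stores (i : 'I_p) j := (basis_row F i <= server_space j)%MS.
Definition involves (i : 'I_p) j :=
  ~~ stores i j && ~~ (server_space j <= zero_coord_space F i)%MS.

Definition storing_servers i := [set j | stores i j].
Definition involving_servers i := [set j | involves i j].
Definition stored_files j := [set i | stores i j].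
Definition involved_files j := [set i | involves i j].

Lemma mxrank_server_space j : (\rank (server_space j) <= t)%N.
Proof. exact: mxrank_sum_genmx_rows. Qed.

Lemma server_count_bound e j : p = (t + e)%N ->
  ((e + 1) * #|stored_files j| + #|involved_files j| <= (e + 1) * t)%N.
Proof.
move=> def_p.
have stored_sub : {in stored_files j, forall i, basis_row F i <= server_space j}%MS.
  by move=> i; rewrite inE.
have rank_stored := card_le_mxrank stored_sub.
have rank_t := mxrank_server_space j.
have card_files : (#|stored_files j| + #|involved_files j| <= p)%N.
  rewrite -cardsUI (_ : _ :&: _ = set0) ?cards0 ?addn0; last first.
    by apply/setP => i; rewrite !inE /involves; case: stores.
  by rewrite -[leqRHS]card_ord max_card.
have [stored_lt_t|t_le_stored] := ltnP #|stored_files j| t; first by nia.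
suff -> : involved_files j = set0.
  by rewrite cards0 addn0 leq_mul2l (leq_trans rank_stored rank_t) orbT.
apply/setP => i; rewrite !inE /involves; apply/negbTE/negP => /andP[not_stored /negP].
apply; apply: (sub_zero_coord_space_of_mxrank_le stored_sub).
  exact: leq_trans rank_t t_le_stored.
by rewrite inE.
Qed.

Lemma recovery_set_cases i S : (basis_row F i <= cols_span C S)%MS ->
  S :&: storing_servers i != set0 \/
  S :&: involving_servers i != set0 /\ (1 < #|S|)%N.
Proof.
move=> recS; case: (eqVneq (S :&: storing_servers i) set0) => [no_store|]; last by left.
right; have S_involving : S :&: involving_servers i != set0.
  apply: contra (basis_row_notin_zero_coord_space F i) => /eqP no_inv.
  apply: submx_trans recS _; apply/sumsmx_subP => j jS.
  move/setP: no_store => /(_ j); move/setP: no_inv => /(_ j).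
  rewrite !inE jS /involves /= => /negbT; rewrite negb_and !negbK.
  by case/orP=> [->|sub_j _]; last exact: sub_j.
split=> //; have [j0] := set0Pn _ S_involving; rewrite inE => /andP[j0S _].
rewrite ltnNge; apply/negP => S_le1.
have def_S : S = [set j0] by apply/esym/eqP; rewrite eqEcard sub1set j0S cards1.
move: recS; rewrite cols_span_server_space def_S big_set1 => stores_j0.
have : j0 \in S :&: storing_servers i by rewrite !inE j0S.
by rewrite no_store inE.
Qed.

Lemma file_count_bound e i k (S : 'I_k -> {set 'I_m}) :
  (forall a b, a != b -> [disjoint S a & S b]) ->
  (forall a, basis_row F i <= cols_span C (S a))%MS ->
  ((2 * e + 1) * k <= (e + 1) * #|storing_servers i| + e * m +
                      #|involving_servers i|)%N.
Proof.
move=> disjS recS.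
(* The recovery sets outside [K] contain an involving server and have size at
   least two. *)
set K := [set a | S a :&: storing_servers i != set0].
have cardK : (#|K| <= #|storing_servers i|)%N := card_meeting_disjoint disjS _.
have cardKC : (#|~: K| <= #|involving_servers i|)%N.
  apply: leq_trans (card_meeting_disjoint disjS _); apply: subset_leq_card.
  by apply/subsetP => a; rewrite !inE; case: (recovery_set_cases (recS a)) => [->|[]].
have sizes : (#|K| + 2 * #|~: K| <= m)%N.
  have := sum_card_setI_disjoint disjS setT; rewrite cardsT card_ord.
  apply: leq_trans; rewrite (bigID (mem K)) /= -sum1_card.
  rewrite mulnC -sum_nat_cond_const; apply: leq_add; apply: leq_sum => a.
    by rewrite setIT inE card_gt0; apply: contra => /eqP ->; rewrite set0I.
  rewrite setIT inE negbK => /eqP no_store.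
  by case: (recovery_set_cases (recS a)) => [|[]//]; rewrite no_store eqxx.
have := cardsC K; rewrite card_ord; nia.
Qed.

Lemma pir_count_bound e k : p = (t + e)%N -> is_kPIR C k ->
  (p * (2 * e + 1) * k <= m * ((e + 1) * t + p * e))%N.
Proof.
move=> def_p kPIR.
have files : (\sum_(i < p) ((2 * e + 1) * k) <=
    \sum_i ((e + 1) * #|storing_servers i| + e * m + #|involving_servers i|))%N.
  apply: leq_sum => i _; have [S [disjS recS]] := kPIR i.
  exact: file_count_bound disjS recS.
have servers : (\sum_(j < m) ((e + 1) * #|stored_files j| + #|involved_files j|) <=
    \sum_(j < m) ((e + 1) * t))%N.
  by apply: leq_sum => j _; apply: server_count_bound.
move: files servers; rewrite !big_split /= -!big_distrr /= !sum_nat_const !card_ord.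
rewrite (sum_card_rel stores) (sum_card_rel involves).
move: (\sum_j _)%N (\sum_j _)%N => stored involved; nia.
Qed.

End ArrayCode.

Theorem corollary1 (delta tau l : nat) :
  (0 < delta)%N -> (0 < tau)%N -> coprime delta tau -> (1 <= l)%N ->
  forall r : rat,
    PIR_rate_achievable (1 + delta%:Q / tau%:Q) (l * tau) r ->
    r <= ((l * delta ^ 2 + tau + 2 * delta * (l * tau))%N%:Q /
          (2 * l * delta ^ 2 + delta + tau + 2 * delta * (l * tau))%N%:Q).
Proof.
move=> delta_gt0 tau_gt0 _ l_ge1 r [F [m [k [p [C [def_p [kPIR ->]]]]]]].
have {}def_p : p = (l * tau + l * delta)%N.
  rewrite -!pmulrn in def_p; apply/eqP.
  rewrite -(eqr_nat rat) def_p natrD !natrM; apply/eqP.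
  have tau_neq0 : tau%:Q != 0 by rewrite pnatr_eq0 -lt0n.
  by field.
have := pir_count_bound def_p kPIR; rewrite def_p => bound.
have [->|m_gt0] := posnP m; first by rewrite invr0 mulr0 divr_ge0 // ler0n.
rewrite ler_pdivrMr ?ltr0n // mulrAC ler_pdivlMr ?ltr0n; last by lia.
rewrite -!natrM ler_nat -(leq_pmul2l l_ge1); nia.
Qed.
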